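(* Let $n\ge2$, $1\le p\le\infty$ and $N\ge0$. Then: (i) $\phi_N$ is quasi-homogeneous of degree $N$ on $[0,R]$; (ii) $\phi_{N+1}(t)\le\phi(t)\phi_N(t)$ for every $t\in[0,R]$; (iii) $\phi_N(t)\le\phi(t)^N$ for every $t\in[0,R]$; (iv) the function $\varphi_N(t)=t\,\phi_N(t)$ is a gauge function of order $N+1$ on $[0,R]$.
   Context: $\omega(t)=\left(1+\frac{t}{(n-1)^{1/p}}\right)^{n-1}$ (with $(n-1)^{1/p}=1$ if $p=\infty$) and $\Psi(t)=(1+2t)\omega(t)$ for $t\ge0$; $R$ is the unique positive solution of $\Psi(t)=2$; $\phi(t)=\frac{\omega(t)-1}{1-2t\omega(t)}$ on $[0,R]$. On $[0,R]$ define recursively $\phi_0\equiv1$, $\omega_N(t)=\left(1+\frac{t\phi_N(t)}{(n-1)^{1/p}}\right)^{n-1}$, $\phi_{N+1}(t)=\frac{\omega_N(t)-1}{1-2t\omega_N(t)}$; these are well-defined nondecreasing functions $[0,R]\to[0,1]$. A function $g:J\to\mathbb{R}_+$ on an interval $J\subseteq\mathbb{R}_+$ containing $0$ is quasi-homogeneous of degree $r\ge0$ on $J$ if $g(\lambda t)\le\lambda^r g(t)$ for all $\lambda\in[0,1]$ and $t\in J$. A function $g:J\to J$ is a gauge function of order $r\ge1$ on $J$ if it is quasi-homogeneous of degree $r$ on $J$ and $g(t)\le t$ for all $t\in J$. *)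

From Stdlib Require Import Reals Lra.
Open Scope R_scope.

Inductive expo : Type := PFin (p : R) | PInf.

Definition expo_ge1 (p : expo) : Prop :=
  match p with PFin q => 1 <= q | PInf => True end.

Definition rootp (n : nat) (p : expo) : R :=
  match p with
  | PFin q => Rpower (INR (n - 1)) (1 / q)
  | PInf => 1
  end.

Definition omega (n : nat) (p : expo) (t : R) : R :=
  (1 + t / rootp n p) ^ (n - 1).

Definition Psi (n : nat) (p : expo) (t : R) : R :=
  (1 + 2 * t) * omega n p t.

Definition phi (n : nat) (p : expo) (t : R) : R :=
  (omega n p t - 1) / (1 - 2 * t * omega n p t).

Fixpoint phiN (n : nat) (p : expo) (N : nat) (t : R) : R :=
  match N with
  | O => 1
  | S M =>
      let w := (1 + t * phiN n p M t / rootp n p) ^ (n - 1) in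
      (w - 1) / (1 - 2 * t * w)
  end.

Definition omegaN (n : nat) (p : expo) (N : nat) (t : R) : R :=
  (1 + t * phiN n p N t / rootp n p) ^ (n - 1).

Definition rpow (l r : R) : R :=
  if Req_EM_T l 0 then (if Req_EM_T r 0 then 1 else 0) else Rpower l r.

Definition inJ (a t : R) : Prop := 0 <= t <= a.

Definition quasi_homogeneous (a : R) (r : R) (g : R -> R) : Prop :=
  (forall t, inJ a t -> 0 <= g t) /\
  forall lam t, 0 <= lam <= 1 -> inJ a t -> g (lam * t) <= rpow lam r * g t.

Definition gauge_function (a : R) (r : R) (g : R -> R) : Prop :=
  (forall t, inJ a t -> inJ a (g t)) /\
  quasi_homogeneous a r g /\
  (forall t, inJ a t -> g t <= t).

(* Both phi and the phi_N are values of one map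
   G_t(y) = (w(t y) - 1) / (1 - 2 t w(t y)),   w(z) = (1 + z / (n-1)^{1/p})^{n-1},
   namely phi(t) = G_t(1) and phi_{N+1}(t) = G_t(phi_N(t)).  On [0, R] the denominator
   is at least w(R) - 1 > 0 (this is where Psi(R) = 2 enters), and since w is
   increasing and convex, s <= t and s y <= a t x with a, x in [0, 1] imply
   G_s(y) <= a G_t(x).  With s = t and x = 1 this gives 0 <= phi_N <= 1 (a = 1) and
   (ii) (a = phi_N(t)), hence (iii); with s = l t, y = phi_N(l t), x = phi_N(t), a = l^{N+1} it
   gives (i) by induction on N, and (iv) follows from (i) and 0 <= phi_N <= 1. *)

From Stdlib Require Import Reals.
From Stdlib Require Import Lra Psatz.
Open Scope R_scope.

Lemma pow_le_1 (l : R) (N : nat) : 0 <= l <= 1 -> l ^ N <= 1.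
Proof. intros Hl. rewrite <- (pow1 N). apply pow_incr. lra. Qed.

Lemma pow_1_plus_scale_le (m : nat) (a u : R) : 0 <= a <= 1 -> 0 <= u ->
  (1 + a * u) ^ m <= 1 + a * ((1 + u) ^ m - 1).
Proof.
  intros Ha Hu. induction m as [|m IH]; simpl; [lra|].
  assert (Hpow : 1 <= (1 + u) ^ m) by (apply pow_R1_Rle; lra).
  assert (Hstep : (1 + a * u) * (1 + a * u) ^ m
                  <= (1 + a * u) * (1 + a * ((1 + u) ^ m - 1)))
    by (apply Rmult_le_compat_l; nra).
  assert (Hslack : 0 <= a * u * ((1 + u) ^ m - 1) * (1 - a)).
  { repeat apply Rmult_le_pos; lra. }
  nra.
Qed.

Lemma rpow_INR (l : R) (N : nat) : 0 <= l -> rpow l (INR N) = l ^ N.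
Proof.
  intros Hl. unfold rpow. destruct (Req_EM_T l 0) as [->|Hl0].
  - destruct (Req_EM_T (INR N) 0) as [HN|HN]; destruct N as [|N].
    + reflexivity.
    + rewrite S_INR in HN. pose proof (pos_INR N). lra.
    + simpl in HN. lra.
    + simpl. ring.
  - apply Rpower_pow. lra.
Qed.

Lemma scaled_mul_le (N : nat) (l t x y : R) : 0 <= l -> 0 <= t ->
  y <= l ^ N * x -> l * t * y <= l ^ S N * (t * x).
Proof.
  intros Hl Ht Hy. simpl.
  assert (l * t * y <= l * t * (l ^ N * x)) by (apply Rmult_le_compat_l; nra).
  lra.
Qed.

Definition wpow (m : nat) (r z : R) : R := (1 + z / r) ^ m.

Definition phi_step (m : nat) (r t y : R) : R :=
  (wpow m r (t * y) - 1) / (1 - 2 * t * wpow m r (t * y)).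

Section Step.
Variables (m : nat) (r R0 : R).
Hypothesis m_ge1 : (1 <= m)%nat.
Hypothesis r_gt0 : 0 < r.
Hypothesis R0_gt0 : 0 < R0.
Hypothesis R0_root : (1 + 2 * R0) * wpow m r R0 = 2.

Lemma wpow_range (z : R) : 0 <= z <= R0 -> 1 <= wpow m r z <= wpow m r R0.
Proof.
  intros Hz. unfold wpow.
  assert (0 <= z / r) by (apply Rle_mult_inv_pos; lra).
  assert (z / r <= R0 / r)
    by (apply Rmult_le_compat_r; [left; apply Rinv_0_lt_compat|]; lra).
  split; [apply pow_R1_Rle | apply pow_incr]; lra.
Qed.

Lemma wpow_R0_gt1 : 1 < wpow m r R0.
Proof.
  apply Rlt_pow_R1; [|lia].
  assert (0 < R0 / r) by (apply Rdiv_lt_0_compat; lra). lra.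
Qed.

Lemma wpow_sub1_le_scale (z z' a : R) : 0 <= a <= 1 -> 0 <= z' -> 0 <= z ->
  z' <= a * z -> wpow m r z' - 1 <= a * (wpow m r z - 1).
Proof.
  intros Ha Hz' Hz Hzz'. unfold wpow.
  assert (Hu : 0 <= z / r) by (apply Rle_mult_inv_pos; lra).
  assert (Hmono : (1 + z' / r) ^ m <= (1 + a * (z / r)) ^ m).
  { apply pow_incr. split.
    - assert (0 <= z' / r) by (apply Rle_mult_inv_pos; lra). lra.
    - unfold Rdiv. rewrite <- Rmult_assoc. apply Rplus_le_compat_l.
      apply Rmult_le_compat_r; [left; apply Rinv_0_lt_compat|]; lra. }
  pose proof (pow_1_plus_scale_le m a (z / r) Ha Hu). lra.
Qed.

(* [R0_root] says exactly that 1 - 2 R0 w(R0) = w(R0) - 1. *)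
Lemma phi_step_denom_ge (t z : R) : 0 <= t <= R0 -> 0 <= z <= R0 ->
  wpow m r R0 - 1 <= 1 - 2 * t * wpow m r z.
Proof.
  intros Ht Hz. destruct (wpow_range z Hz).
  assert (t * wpow m r z <= R0 * wpow m r R0) by (apply Rmult_le_compat; lra).
  lra.
Qed.

Lemma phi_step_le_scale (s t x y a : R) :
  0 <= s <= t -> t <= R0 -> 0 <= x <= 1 -> 0 <= a <= 1 -> 0 <= y ->
  s * y <= a * (t * x) ->
  phi_step m r s y <= a * phi_step m r t x.
Proof.
  intros Hs Ht Hx Ha Hy Hsy. unfold phi_step.
  assert (Htx : 0 <= t * x <= R0) by nra.
  assert (Hsy0 : 0 <= s * y <= R0) by nra.
  destruct (wpow_range _ Htx), (wpow_range _ Hsy0).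
  assert (Hnum : wpow m r (s * y) - 1 <= a * (wpow m r (t * x) - 1))
    by (apply wpow_sub1_le_scale; lra).
  assert (Hw : wpow m r (s * y) <= wpow m r (t * x)) by nra.
  assert (Hden : 0 < 1 - 2 * t * wpow m r (t * x)).
  { assert (Ht0 : 0 <= t <= R0) by lra.
    pose proof (phi_step_denom_ge t (t * x) Ht0 Htx). pose proof wpow_R0_gt1. lra. }
  assert (Hden' : 1 - 2 * t * wpow m r (t * x) <= 1 - 2 * s * wpow m r (s * y)).
  { assert (s * wpow m r (s * y) <= t * wpow m r (t * x))
      by (apply Rmult_le_compat; lra). lra. }
  unfold Rdiv.
  apply Rle_trans with ((wpow m r (s * y) - 1) * / (1 - 2 * t * wpow m r (t * x))).
  - apply Rmult_le_compat_l; [lra|]. apply Rinv_le_contravar; lra.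
  - rewrite <- Rmult_assoc. apply Rmult_le_compat_r; [|lra].
    left. apply Rinv_0_lt_compat. lra.
Qed.

Lemma phi_step_nonneg (t y : R) : 0 <= t <= R0 -> 0 <= y <= 1 ->
  0 <= phi_step m r t y.
Proof.
  intros Ht Hy. unfold phi_step.
  assert (Hty : 0 <= t * y <= R0) by nra.
  destruct (wpow_range _ Hty).
  pose proof (phi_step_denom_ge t (t * y) Ht Hty). pose proof wpow_R0_gt1.
  apply Rle_mult_inv_pos; lra.
Qed.

Lemma phi_step_1_le_1 (t : R) : 0 <= t <= R0 -> phi_step m r t 1 <= 1.
Proof.
  intros Ht. unfold phi_step. rewrite Rmult_1_r.
  destruct (wpow_range _ Ht).
  pose proof (phi_step_denom_ge t t Ht Ht). pose proof wpow_R0_gt1.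
  apply (Rmult_le_reg_r (1 - 2 * t * wpow m r t)); [lra|].
  unfold Rdiv. rewrite Rmult_assoc, Rinv_l by lra. lra.
Qed.

End Step.

Section PhiN.
Variables (n : nat) (p : expo) (Rr : R).
Hypothesis n_ge2 : (2 <= n)%nat.
Hypothesis Rr_gt0 : 0 < Rr.
Hypothesis Psi_Rr : Psi n p Rr = 2.

Lemma rootp_gt0 : 0 < rootp n p.
Proof. destruct p; simpl; [apply exp_pos | lra]. Qed.

Let m_ge1 : (1 <= n - 1)%nat.
Proof. lia. Qed.

Let step_le_scale := phi_step_le_scale (n - 1) (rootp n p) Rr m_ge1 rootp_gt0 Rr_gt0 Psi_Rr.
Let step_nonneg := phi_step_nonneg (n - 1) (rootp n p) Rr m_ge1 rootp_gt0 Rr_gt0 Psi_Rr.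

Lemma phiN_succ (N : nat) (t : R) :
  phiN n p (S N) t = phi_step (n - 1) (rootp n p) t (phiN n p N t).
Proof. reflexivity. Qed.

Lemma phi_step_one (t : R) : phi n p t = phi_step (n - 1) (rootp n p) t 1.
Proof. unfold phi, phi_step. rewrite Rmult_1_r. reflexivity. Qed.

Lemma phi_nonneg (t : R) : inJ Rr t -> 0 <= phi n p t.
Proof. intros Ht. rewrite phi_step_one. apply step_nonneg; [exact Ht | lra]. Qed.

Lemma phiN_range (N : nat) (t : R) : inJ Rr t -> 0 <= phiN n p N t <= 1.
Proof.
  intros Ht. induction N as [|N IH]; [simpl; lra|].
  rewrite phiN_succ. split; [apply step_nonneg; assumption|].
  apply Rle_trans with (1 * phi_step (n - 1) (rootp n p) t 1).
  - destruct Ht. apply step_le_scale; nra.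
  - rewrite Rmult_1_l.
    exact (phi_step_1_le_1 (n - 1) (rootp n p) Rr m_ge1 rootp_gt0 Rr_gt0 Psi_Rr t Ht).
Qed.

Lemma phiN_succ_le_phi_mul (N : nat) (t : R) : inJ Rr t ->
  phiN n p (S N) t <= phi n p t * phiN n p N t.
Proof.
  intros Ht. rewrite phiN_succ, phi_step_one, Rmult_comm.
  destruct (phiN_range N t Ht), Ht. apply step_le_scale; nra.
Qed.

Lemma phiN_le_phi_pow (N : nat) (t : R) : inJ Rr t -> phiN n p N t <= phi n p t ^ N.
Proof.
  intros Ht. induction N as [|N IH]; [simpl; lra|].
  apply Rle_trans with (phi n p t * phiN n p N t); [apply phiN_succ_le_phi_mul; exact Ht|].
  simpl. apply Rmult_le_compat_l; [apply phi_nonneg|]; assumption.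
Qed.

Lemma inJ_scale (l t : R) : 0 <= l <= 1 -> inJ Rr t -> inJ Rr (l * t).
Proof. unfold inJ. nra. Qed.

Lemma phiN_scale_le (N : nat) (l t : R) : 0 <= l <= 1 -> inJ Rr t ->
  phiN n p N (l * t) <= l ^ N * phiN n p N t.
Proof.
  intros Hl Ht. induction N as [|N IH]; [simpl; lra|].
  rewrite !phiN_succ.
  destruct (phiN_range N (l * t) (inJ_scale l t Hl Ht)).
  destruct (phiN_range N t Ht).
  pose proof (pow_le l (S N) (proj1 Hl)). pose proof (pow_le_1 l (S N) Hl).
  destruct Ht. apply step_le_scale; try nra.
  apply scaled_mul_le; lra.
Qed.

Lemma id_mul_phiN_scale_le (N : nat) (l t : R) : 0 <= l <= 1 -> inJ Rr t ->
  l * t * phiN n p N (l * t) <= l ^ S N * (t * phiN n p N t).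
Proof.
  intros Hl Ht. apply scaled_mul_le; [lra | apply Ht | apply phiN_scale_le; assumption].
Qed.

End PhiN.

Theorem lemma2p3 (n : nat) (p : expo) (N : nat) (Rr : R) :
  (2 <= n)%nat -> expo_ge1 p ->
  0 < Rr -> Psi n p Rr = 2 ->
  (forall t, 0 < t -> Psi n p t = 2 -> t = Rr) ->
  quasi_homogeneous Rr (INR N) (phiN n p N) /\
  (forall t, inJ Rr t -> phiN n p (S N) t <= phi n p t * phiN n p N t) /\
  (forall t, inJ Rr t -> phiN n p N t <= (phi n p t) ^ N) /\
  gauge_function Rr (INR (S N)) (fun t => t * phiN n p N t).
Proof.
  intros Hn _ HRr HPsi _.
  pose proof (phiN_range n p Rr Hn HRr HPsi N) as Hrange.
  split; [|split; [|split]].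
  - split; [intros t Ht; apply Hrange, Ht|].
    intros l t Hl Ht. rewrite rpow_INR by lra. apply (phiN_scale_le n p Rr); assumption.
  - apply (phiN_succ_le_phi_mul n p Rr); assumption.
  - apply (phiN_le_phi_pow n p Rr); assumption.
  - assert (Hle : forall t, inJ Rr t -> 0 <= t * phiN n p N t <= t).
    { intros t Ht. destruct (Hrange t Ht), Ht. split; nra. }
    split; [|split; [split|]].
    + intros t Ht. destruct (Hle t Ht), Ht. split; lra.
    + intros t Ht. apply Hle, Ht.
    + intros l t Hl Ht. rewrite rpow_INR by lra.
      apply (id_mul_phiN_scale_le n p Rr); assumption.
    + intros t Ht. apply Hle, Ht.
Qed.
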